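(* Let $S$ be a $\Gamma$-hemiring, let $\mu,\nu$ be fuzzy h-ideals of $S$ and let $x,y\in S$. Then $\langle x,\mu\rangle\times\langle y,\nu\rangle$ is a fuzzy h-ideal of the $\Gamma$-hemiring $S\times S$.
   Context: A $\Gamma$-hemiring is a pair of additive commutative semigroups with zero $S$ and $\Gamma$ with a map $S\times\Gamma\times S\to S$, $(a,\alpha,b)\mapsto a\alpha b$, such that for all $a,b,c\in S$, $\alpha,\beta\in\Gamma$: $(a+b)\alpha c=a\alpha c+b\alpha c$; $a\alpha(b+c)=a\alpha b+a\alpha c$; $a(\alpha+\beta)b=a\alpha b+a\beta b$; $a\alpha(b\beta c)=(a\alpha b)\beta c$; $0\alpha a=0=a\alpha0$; $a0b=0=b0a$. $S\times S$ is a $\Gamma$-hemiring with componentwise addition and $(a,b)\gamma(c,d)=(a\gamma c,b\gamma d)$. A fuzzy h-ideal of a $\Gamma$-hemiring $T$ is a map $\mu:T\to[0,1]$, not identically $0$, such that for all $x,y,a,b,z\in T$, $\gamma\in\Gamma$: $\mu(x+y)\ge\min\{\mu(x),\mu(y)\}$; $\mu(x\gamma y)\ge\mu(x)$ and $\mu(x\gamma y)\ge\mu(y)$; $x+a+z=b+z$ implies $\mu(x)\ge\min\{\mu(a),\mu(b)\}$. For fuzzy subsets $\mu,\nu$ of $S$, $(\mu\times\nu)(a,b)=\min\{\mu(a),\nu(b)\}$. The extension of a fuzzy subset $\mu$ of $S$ by $x\in S$ is $\langle x,\mu\rangle(y)=\inf_{s\in S,\ \alpha,\gamma\in\Gamma}\mu(x\alpha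 s\gamma y)$. *)

From mathcomp Require Import all_boot all_order all_algebra.
From mathcomp Require Import boolp classical_sets reals.
Set Implicit Arguments. Unset Strict Implicit. Unset Printing Implicit Defensive.
Import Order.TTheory GRing.Theory Num.Theory.
Local Open Scope ring_scope.
Local Open Scope classical_set_scope.

Definition is_Gamma_hemiring (S G : nmodType) (op : S -> G -> S -> S) : Prop :=
  (forall (a b c : S) (al : G), op (a + b) al c = op a al c + op b al c) /\
      (forall (a b c : S) (al : G), op a al (b + c) = op a al b + op a al c) /\
      (forall (a b : S) (al be : G), op a (al + be) b = op a al b + op a be b) /\
      (forall (a b c : S) (al be : G), op a al (op b be c) = op (op a al b) be c) /\
      (forall (a : S) (al : G), op 0 al a = 0 /\ op a al 0 = 0) /\
      (forall (a b : S), op a 0 b = 0 /\ op b 0 a = 0).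

Definition prod_op (S G : nmodType) (op : S -> G -> S -> S)
  (p : S * S) (g : G) (q : S * S) : S * S :=
  (op p.1 g q.1, op p.2 g q.2).

Definition fuzzy_h_ideal (R : realType) (T G : nmodType) (op : T -> G -> T -> T)
  (mu : T -> R) : Prop :=
  [/\ (forall x, 0 <= mu x <= 1),
      (exists x, mu x != 0),
      (forall x y, mu (x + y) >= Num.min (mu x) (mu y)),
      (forall x y (g : G), mu (op x g y) >= mu x /\ mu (op x g y) >= mu y) &
      (forall x a b z, x + a + z = b + z -> mu x >= Num.min (mu a) (mu b))].

Definition fuzzy_prod (R : realType) (S : nmodType) (mu nu : S -> R)
  (p : S * S) : R := Num.min (mu p.1) (nu p.2).

Definition extension (R : realType) (S G : nmodType) (op : S -> G -> S -> S)
  (x : S) (mu : S -> R) (y : S) : R :=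
  inf [set r : R | exists (s : S) (al ga : G), r = mu (op (op x al s) ga y)].

From mathcomp Require Import all_boot all_order all_algebra.
From mathcomp Require Import boolp classical_sets reals.
Set Implicit Arguments. Unset Strict Implicit. Unset Printing Implicit Defensive.
Import Order.TTheory GRing.Theory Num.Theory.
Local Open Scope ring_scope.
Local Open Scope classical_set_scope.

(* Each closure property of <x,mu> at y is inherited from the same property of
   mu at x alpha s gamma y, by distributivity and associativity of the ternary
   operation, and is then carried through the infimum.  Nonvanishing holds at 0:
   <x,mu>(0) >= mu 0 >= mu w for every w.  A product of two fuzzy h-ideals is one
   because every condition is checked componentwise and min is monotone. *)

Section Extension.
Variables (R : realType) (S G : nmodType) (op : S -> G -> S -> S).
Variables (mu : S -> R) (x : S).

Lemma extension_ge (k : R) (a : S) :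
  (forall s al ga, k <= mu (op (op x al s) ga a)) -> k <= extension op x mu a.
Proof.
move=> k_lb; apply: lb_le_inf; last by move=> _ [s [al [ga ->]]].
by exists (mu (op (op x 0 0) 0 a)), 0, 0, 0.
Qed.

Lemma extension_le (a s : S) (al ga : G) :
  (forall z, 0 <= mu z) -> extension op x mu a <= mu (op (op x al s) ga a).
Proof.
move=> mu_ge0; apply: ge_inf; last by exists s, al, ga.
by exists 0 => _ [s' [al' [ga' ->]]].
Qed.

End Extension.

Section HIdeal.
Variables (R : realType) (S G : nmodType) (op : S -> G -> S -> S).
Hypothesis hemiring : is_Gamma_hemiring op.

Lemma fuzzy_h_ideal_le0 (mu : S -> R) (w : S) :
  fuzzy_h_ideal op mu -> mu w <= mu 0.
Proof.
have [_ [_ [_ [_ [zero_op _]]]]] := hemiring.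
by case=> _ _ _ mu_mul _; rewrite -(zero_op w 0).1; apply: (mu_mul 0 w 0).2.
Qed.

Lemma fuzzy_h_ideal_gt0 (mu : S -> R) : fuzzy_h_ideal op mu -> 0 < mu 0.
Proof.
move=> mu_ideal; have [mu01 [w mu_w] _ _ _] := mu_ideal.
have /andP[mu_w_ge0 _] := mu01 w.
by apply: lt_le_trans (fuzzy_h_ideal_le0 w mu_ideal); rewrite lt_neqAle eq_sym mu_w.
Qed.

Lemma extension_h_ideal (mu : S -> R) (x : S) :
  fuzzy_h_ideal op mu -> fuzzy_h_ideal op (extension op x mu).
Proof.
move=> mu_ideal; have [mu01 _ mu_add mu_mul mu_h] := mu_ideal.
have [_ [distr_r [_ [assoc [zero_op _]]]]] := hemiring.
have mu_ge0 z : 0 <= mu z by case/andP: (mu01 z).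
have ext_le a s al ga : extension op x mu a <= mu (op (op x al s) ga a).
  exact: extension_le.
split.
- move=> a; apply/andP; split.
    by apply: extension_ge => s al ga; apply: mu_ge0.
  by apply: le_trans (ext_le a 0 0 0) _; case/andP: (mu01 (op (op x 0 0) 0 a)).
- exists 0; rewrite gt_eqF //; apply: lt_le_trans (fuzzy_h_ideal_gt0 mu_ideal) _.
  by apply: extension_ge => s al ga; rewrite (zero_op _ ga).2.
- move=> a b; apply: extension_ge => s al ga; rewrite distr_r.
  by apply: le_trans (mu_add _ _); apply: le_min2; apply: ext_le.
- move=> a b g; split; apply: extension_ge => s al ga; rewrite assoc.
    by apply: le_trans (mu_mul _ _ _).1; apply: ext_le.
  by rewrite -[op (op x al s) ga a]assoc; apply: ext_le.
- move=> a c b z E; apply: extension_ge => s al ga.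
  set u := op x al s.
  have Eu : op u ga a + op u ga c + op u ga z = op u ga b + op u ga z.
    by rewrite -!distr_r E.
  by apply: le_trans (mu_h _ _ _ _ Eu); apply: le_min2; apply: ext_le.
Qed.

Lemma fuzzy_prod_h_ideal (mu nu : S -> R) :
  fuzzy_h_ideal op mu -> fuzzy_h_ideal op nu ->
  fuzzy_h_ideal (prod_op op) (fuzzy_prod mu nu).
Proof.
move=> mu_ideal nu_ideal.
have [mu01 _ mu_add mu_mul mu_h] := mu_ideal.
have [nu01 _ nu_add nu_mul nu_h] := nu_ideal.
rewrite /fuzzy_prod /prod_op; split.
- move=> [p q] /=; have /andP[mu_ge0 mu_le1] := mu01 p.
  have /andP[nu_ge0 _] := nu01 q.
  by rewrite le_min mu_ge0 nu_ge0 ge_min mu_le1.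
- exists 0; rewrite gt_eqF // lt_min.
  by rewrite (fuzzy_h_ideal_gt0 mu_ideal) (fuzzy_h_ideal_gt0 nu_ideal).
- move=> [a1 a2] [b1 b2] /=; rewrite minACA.
  exact: le_min2 (mu_add a1 b1) (nu_add a2 b2).
- move=> [a1 a2] [b1 b2] g /=.
  have [mu_l mu_r] := mu_mul a1 b1 g; have [nu_l nu_r] := nu_mul a2 b2 g.
  by split; apply: le_min2.
- move=> [a1 a2] [c1 c2] [b1 b2] [z1 z2] [E1 E2] /=; rewrite minACA.
  exact: le_min2 (mu_h _ _ _ _ E1) (nu_h _ _ _ _ E2).
Qed.

End HIdeal.

Theorem theorem3p15 (R : realType) (S G : nmodType) (op : S -> G -> S -> S)
  (mu nu : S -> R) (x y : S) :
  is_Gamma_hemiring op ->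
  fuzzy_h_ideal op mu -> fuzzy_h_ideal op nu ->
  fuzzy_h_ideal (prod_op op) (fuzzy_prod (extension op x mu) (extension op y nu)).
Proof.
move=> hemiring mu_ideal nu_ideal.
by apply: fuzzy_prod_h_ideal => //; apply: extension_h_ideal.
Qed.
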